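(* A linear operator $Q:P\to P$ is a $\partial_\psi$-delta operator if and only if there exists an invertible $S\in\Sigma_\psi$ (with $S^{-1}\in\Sigma_\psi$) such that $Q=\partial_\psi S$.
   Context: Let $F$ be a field of characteristic $0$, $P=F[x]$. Fix $(\psi_n)_{n\ge0}$ in $F$ with $\psi_0=1$, $\psi_n\ne0$, $\psi_{-1}=0$; $n_\psi=\psi_{n-1}/\psi_n$, $n_\psi!=1/\psi_n$, $0_\psi!=1$. $\partial_\psi x^n=n_\psi x^{n-1}$ (linear); $E^a(\partial_\psi)=\sum_k\frac{a^k}{k_\psi!}\partial_\psi^k$. $\Sigma_\psi$ is the algebra of linear $T:P\to P$ commuting with all $E^a(\partial_\psi)$, $a\in F$. A $\partial_\psi$-delta operator is $Q\in\Sigma_\psi$ with $Q(x)$ a nonzero constant. *)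

From HB Require Import structures.
From mathcomp Require Import all_boot all_order all_algebra.
Set Implicit Arguments. Unset Strict Implicit. Unset Printing Implicit Defensive.
Import Order.TTheory GRing.Theory Num.Theory.
Local Open Scope ring_scope.

Section PsiCalculus.
Variable F : fieldType.
Variable psi : nat -> F.

(* n_psi = psi_{n-1} / psi_n, with psi_{-1} = 0, so 0_psi = 0. *)
Definition psinum (n : nat) : F :=
  if n is m.+1 then psi m / psi n else 0.

(* partial_psi : x^n |-> n_psi x^(n-1), extended linearly:
   the i-th coefficient of dpsi p is (i+1)_psi * p_(i+1). *)
Definition dpsi (p : {poly F}) : {poly F} :=
  \poly_(i < (size p).-1) (psinum i.+1 * p`_i.+1).

(* E^a(partial_psi) = sum_k a^k / k_psi! partial_psi^k, with 1/k_psi! = psi_k.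
   On a polynomial p the terms with k >= size p vanish, so the sum is finite. *)
Definition Epsi (a : F) (p : {poly F}) : {poly F} :=
  \sum_(k < size p) (a ^+ k * psi k) *: iter k dpsi p.

Definition inSigma (T : {poly F} -> {poly F}) : Prop :=
  linear T /\ forall (a : F) (p : {poly F}), T (Epsi a p) = Epsi a (T p).

Definition isDelta (Q : {poly F} -> {poly F}) : Prop :=
  inSigma Q /\ exists c : F, c != 0 /\ Q 'X = c%:P.

End PsiCalculus.

From HB Require Import structures.
From mathcomp Require Import all_boot all_order all_algebra.
From mathcomp Require Import ring.
(* An operator T in Sigma_psi is a formal power series in partial_psi:
   T = sum_k c_k partial_psi^k with c_k = psi_k (T x^k)(0).  Indeed
   (E^a r)(0) = r(a), so (T x^n)(a) = (T (E^a x^n))(0), which expands into the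
   values of that series at a; in characteristic 0 a polynomial is determined by
   its values.  Such series commute with partial_psi and with each other, and are
   triangular with diagonal c_0, hence invertible when c_0 <> 0.  If Q is a delta
   operator then Q(x) constant forces c_0 = 0, while c_1 = psi_1 Q(x) <> 0, so
   Q = partial_psi S with S = sum_k c_(k+1) partial_psi^k invertible.  Conversely
   partial_psi S commutes with every E^a and sends x to psi_0/psi_1 times the
   leading coefficient of S, which is nonzero because S is injective. *)

Set Implicit Arguments. Unset Strict Implicit. Unset Printing Implicit Defensive.
Import GRing.Theory.
Local Open Scope ring_scope.

Section PsiSeries.
Variables (F : fieldType) (psi : nat -> F).
Hypothesis psi_neq0 : forall n, psi n != 0.

Definition psi_series (c : nat -> F) (p : {poly F}) : {poly F} :=
  \sum_(k < size p) c k *: iter k (dpsi psi) p.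

Lemma EpsiE (a : F) : Epsi psi a =1 psi_series (fun k => a ^+ k * psi k).
Proof. by []. Qed.

Lemma coef_dpsi (p : {poly F}) (i : nat) :
  (dpsi psi p)`_i = psinum psi i.+1 * p`_i.+1.
Proof.
rewrite coef_poly; case: ltnP => // le_p_i.
by rewrite nth_default ?mulr0 //; case: (size p) le_p_i.
Qed.

Lemma coef_iter_dpsi (k : nat) (p : {poly F}) (i : nat) :
  (iter k (dpsi psi) p)`_i = psi i / psi (i + k) * p`_(i + k).
Proof.
elim: k i => [|k IHk] i /=; first by rewrite addn0 divff // mul1r.
rewrite coef_dpsi IHk addSnnS /psinum.
by field; rewrite !psi_neq0.
Qed.

Lemma coef_psi_series (c : nat -> F) (p : {poly F}) (N i : nat) :
  (size p <= N)%N ->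
  (psi_series c p)`_i = \sum_(k < N) c k * (psi i / psi (i + k) * p`_(i + k)).
Proof.
move=> le_p_N; rewrite coef_sum.
under eq_bigr => k _ do rewrite coefZ coef_iter_dpsi.
rewrite (big_ord_widen _ (fun k => c k * (psi i / psi (i + k) * p`_(i + k))) le_p_N).
rewrite big_mkcond /=; apply: eq_bigr => k _; case: ltnP => // le_p_k.
by rewrite nth_default ?mulr0 // (leq_trans le_p_k (leq_addl _ _)).
Qed.

Lemma size_psi_series (c : nat -> F) (p : {poly F}) :
  (size (psi_series c p) <= size p)%N.
Proof.
apply/leq_sizeP => j le_p_j; rewrite (coef_psi_series _ _ (leqnn _)).
by apply: big1 => k _; rewrite nth_default ?mulr0 // (leq_trans le_p_j (leq_addr _ _)).
Qed.

Lemma psi_series_is_linear (c : nat -> F) : linear (psi_series c).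
Proof.
move=> a u v; pose N := maxn (size u) (size v).
have le_u : (size u <= N)%N by rewrite leq_maxl.
have le_v : (size v <= N)%N by rewrite leq_maxr.
have le_auv : (size (a *: u + v)%R <= N)%N.
  by rewrite (leq_trans (size_polyD _ _)) // geq_max (leq_trans (size_scale_leq _ _)).
apply/polyP => i; rewrite coefD coefZ (coef_psi_series _ _ le_auv).
rewrite (coef_psi_series _ _ le_u) (coef_psi_series _ _ le_v) mulr_sumr -big_split /=.
by apply: eq_bigr => k _; rewrite coefD coefZ; ring.
Qed.

HB.instance Definition _ (c : nat -> F) :=
  GRing.isLinear.Build F {poly F} {poly F} *:%R (psi_series c) (psi_series_is_linear c).

Lemma coef_psi_series_top (c : nat -> F) (p : {poly F}) (n : nat) :
  (size p <= n.+1)%N -> (psi_series c p)`_n = c 0%N * p`_n.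
Proof.
move=> le_p_n; rewrite (coef_psi_series _ _ le_p_n) big_ord_recl addn0 divff // mul1r.
rewrite big1 ?addr0 // => k _; rewrite nth_default ?mulr0 //.
by rewrite (leq_trans le_p_n) // addnS ltnS leq_addr.
Qed.

Lemma psi_series_inj (c : nat -> F) : c 0%N != 0 -> injective (psi_series c).
Proof.
move=> c0_neq0; apply: raddf_inj => p /eqP Sp0; apply/eqP; apply: contraTT Sp0 => p_neq0.
have size_p : (size p <= (size p).-1.+1)%N by rewrite prednK ?size_poly_gt0.
apply/eqP => /(congr1 (fun q : {poly F} => q`_(size p).-1)).
rewrite coef_psi_series_top // coef0 => /eqP.
by rewrite mulf_eq0 (negPf c0_neq0) lead_coef_eq0 (negPf p_neq0).
Qed.

Lemma psi_series_surj (c : nat -> F) :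
  c 0%N != 0 -> forall q, exists p, psi_series c p = q.
Proof.
move=> c0_neq0 q; elim: (size q) {-2}q (leqnn (size q)) => [|n IHn] {}q le_q_n.
  by exists 0; rewrite linear0; move: le_q_n; rewrite leqn0 size_poly_eq0 => /eqP.
pose m := (q`_n / c 0%N) *: 'X^n.
have le_m_n : (size m <= n.+1)%N by rewrite (leq_trans (size_scale_leq _ _)) ?size_polyXn.
have [|p Sp] := IHn (q - psi_series c m).
  apply/leq_sizeP => j; rewrite leq_eqVlt coefB => /predU1P[<-|lt_n_j].
    by rewrite coef_psi_series_top // coefZ coefXn eqxx mulr1 mulrC divfK ?subrr.
  rewrite !nth_default ?subr0 // ?(leq_trans le_q_n) //.
  exact: leq_trans (size_psi_series _ _) (leq_trans le_m_n lt_n_j).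
by exists (m + p); rewrite raddfD /= Sp addrC subrK.
Qed.

Lemma psi_series_bij (c : nat -> F) : c 0%N != 0 -> bijective (psi_series c).
Proof.
move=> c0_neq0; have surj q : exists p, psi_series c p == q.
  by have [p /eqP] := psi_series_surj c0_neq0 q; exists p.
have SK q : psi_series c (xchoose (surj q)) = q by apply/eqP/(xchooseP (surj q)).
exists (fun q => xchoose (surj q)) => // p.
by apply: (psi_series_inj c0_neq0); rewrite SK.
Qed.

Lemma psi_series_polyC (c : nat -> F) (a : F) :
  psi_series c a%:P = (c 0%N * a)%:P.
Proof.
apply/polyP => -[|i]; rewrite coefC /=.
  by rewrite coef_psi_series_top ?size_polyC_leq1 // coefC.
rewrite nth_default // (leq_trans (size_psi_series _ _)) //.
exact: leq_trans (size_polyC_leq1 _) _.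
Qed.

Lemma psi_series_comm (c d : nat -> F) (p : {poly F}) :
  psi_series c (psi_series d p) = psi_series d (psi_series c p).
Proof.
apply/polyP => i.
rewrite !(coef_psi_series _ _ (size_psi_series _ _)).
under eq_bigr => k _ do rewrite (coef_psi_series _ _ (leqnn _)) !mulr_sumr.
under [RHS]eq_bigr => k _ do rewrite (coef_psi_series _ _ (leqnn _)) !mulr_sumr.
rewrite exchange_big /=; apply: eq_bigr => k _; apply: eq_bigr => j _.
rewrite -!addnA [(j + k)%N]addnC.
by field; rewrite !psi_neq0.
Qed.

Lemma dpsi_psi_series (c : nat -> F) (p : {poly F}) :
  dpsi psi (psi_series c p) = psi_series c (dpsi psi p).
Proof.
have le_Dp_p : (size (dpsi psi p) <= size p)%N.
  by rewrite (leq_trans (size_poly _ _)) ?leq_pred.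
apply/polyP => i; rewrite coef_dpsi (coef_psi_series _ _ le_Dp_p).
rewrite (coef_psi_series _ _ (leqnn _)).
rewrite mulr_sumr; apply: eq_bigr => k _; rewrite coef_dpsi /psinum addSn.
by field; rewrite !psi_neq0.
Qed.

Lemma psi_series_shift (c : nat -> F) (p : {poly F}) :
  c 0%N = 0 -> psi_series c p = dpsi psi (psi_series (c \o succn) p).
Proof.
move=> c0; apply/polyP => i.
rewrite (coef_psi_series _ _ (leqnSn _)) big_ord_recl c0 mul0r add0r.
rewrite coef_dpsi (coef_psi_series _ _ (leqnn _)) mulr_sumr.
apply: eq_bigr => k _; rewrite /psinum /bump /= addnS addSn.
by field; rewrite !psi_neq0.
Qed.

Lemma psi_series_inSigma (c : nat -> F) : inSigma psi (psi_series c).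
Proof.
split; first exact: psi_series_is_linear.
by move=> a p; rewrite !EpsiE psi_series_comm.
Qed.

Lemma dpsi_size_le2 (p : {poly F}) :
  (size p <= 2)%N -> dpsi psi p = (psinum psi 1 * p`_1)%:P.
Proof.
move=> le_p_2; apply/polyP => -[|i]; rewrite coef_dpsi coefC //=.
by rewrite nth_default ?mulr0 // (leq_trans le_p_2).
Qed.

End PsiSeries.

Lemma inSigma_inverse (F : fieldType) (psi : nat -> F) (T Tinv : {poly F} -> {poly F}) :
  inSigma psi T -> cancel T Tinv -> cancel Tinv T -> inSigma psi Tinv.
Proof.
move=> [linT commT] TK TinvK; split.
  by move=> a u v; apply: (can_inj TK); rewrite linT !TinvK.
by move=> a p; apply: (can_inj TK); rewrite commT !TinvK.
Qed.

Lemma pchar0_poly_ext (F : fieldType) (charF0 : [pchar F] =i pred0) (p q : {poly F}) :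
  (forall a, p.[a] = q.[a]) -> p = q.
Proof.
move=> eq_pq; apply/eqP; rewrite -subr_eq0; apply: contraT => pq_neq0.
have natr_inj : injective (fun n : nat => n%:R : F).
  move=> m n /eqP; rewrite -subr_eq0.
  wlog le_mn : m n / (m <= n)%N.
    by move=> W; case: (leqP m n) => [/W//|/ltnW/W]; rewrite -opprB oppr_eq0 => /[apply].
  rewrite -opprB oppr_eq0 -natrB // (pcharf0P _).1 // subn_eq0 => le_nm.
  by apply/eqP; rewrite eqn_leq le_mn.
pose rs := [seq i%:R : F | i <- iota 0 (size (p - q))].
have rs_roots : all (root (p - q)) rs.
  by apply/allP => x _; rewrite /root hornerD hornerN eq_pq subrr.
have := max_poly_roots pq_neq0 rs_roots.
by rewrite map_inj_uniq ?iota_uniq // size_map size_iota ltnn; apply.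
Qed.

Section Expansion.
Variables (F : fieldType) (psi : nat -> F).
Hypotheses (charF0 : [pchar F] =i pred0) (psi0 : psi 0%N = 1)
  (psi_neq0 : forall n, psi n != 0).

Definition sigma_coef (T : {poly F} -> {poly F}) (k : nat) : F := psi k * (T 'X^k).[0].

Lemma horner_Epsi0 (a : F) (r : {poly F}) : (Epsi psi a r).[0] = r.[a].
Proof.
rewrite horner_coef0 /Epsi coef_sum horner_coef; apply: eq_bigr => k _.
by rewrite coefZ coef_iter_dpsi // add0n psi0; field; rewrite psi_neq0.
Qed.

Lemma iter_dpsi_Xn (k n : nat) : (k <= n)%N ->
  iter k (dpsi psi) 'X^n = (psi (n - k) / psi n) *: 'X^(n - k).
Proof.
move=> le_kn; apply/polyP => i; rewrite coef_iter_dpsi // coefZ !coefXn.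
have -> : ((i + k)%N == n) = (i == n - k)%N.
  by apply/eqP/eqP => [<-|->]; rewrite ?addnK ?subnK.
by case: eqP => [->|_]; rewrite ?subnK ?mulr0 ?mulr1.
Qed.

Theorem inSigma_psi_series (T : {poly F} -> {poly F}) :
  inSigma psi T -> T =1 psi_series psi (sigma_coef T).
Proof.
move=> [linT commT].
pose TL : {linear {poly F} -> {poly F}} := HB.pack T (GRing.isLinear.Build _ _ _ _ T linT).
have TXn n : T 'X^n = psi_series psi (sigma_coef T) 'X^n.
  apply: (pchar0_poly_ext charF0) => a.
  rewrite -horner_Epsi0 -commT /Epsi /psi_series size_polyXn.
  rewrite -[T]/(TL : _ -> _) linear_sum.
  under eq_bigr => k _ do rewrite linearZ (iter_dpsi_Xn (leq_ord k)) linearZ.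
  rewrite !horner_sum (reindex_inj rev_ord_inj); apply: eq_bigr => k _ /=.
  rewrite !hornerZ (iter_dpsi_Xn (leq_ord k)) hornerZ hornerXn subSS subKn ?leq_ord //.
  by rewrite /sigma_coef; field; rewrite psi_neq0.
move=> p; rewrite -[p]coefK poly_def -[T]/(TL : _ -> _) !linear_sum.
by apply: eq_bigr => i _; rewrite !linearZ /= TXn.
Qed.

End Expansion.

Theorem mainTheorem10 (F : fieldType) (charF0 : [pchar F] =i pred0)
    (psi : nat -> F) (psi0 : psi 0%N = 1) (psi_neq0 : forall n, psi n != 0)
    (Q : {poly F} -> {poly F}) (linQ : linear Q) :
  isDelta psi Q <->
  exists S Sinv : {poly F} -> {poly F},
    [/\ inSigma psi S, inSigma psi Sinv, cancel S Sinv, cancel Sinv S &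
        forall p, Q p = dpsi psi (S p)].
Proof.
have size_X : (size ('X : {poly F}) <= 2)%N by rewrite size_polyX.
split.
- move=> [sigQ [q [q_neq0 QX]]].
  have Qser := inSigma_psi_series charF0 psi0 psi_neq0 sigQ.
  set c := sigma_coef psi Q in Qser.
  have c0 : c 0%N = 0.
    by have := coef_psi_series_top psi_neq0 c size_X; rewrite -Qser QX coefC coefX mulr1.
  have c1 : c 1%N != 0 by rewrite /c /sigma_coef expr1 QX hornerC mulf_neq0.
  have [Sinv SK SinvK] := psi_series_bij psi_neq0 (c := c \o succn) c1.
  exists (psi_series psi (c \o succn)), Sinv; split => //.
  + exact: psi_series_inSigma.
  + exact: inSigma_inverse (psi_series_inSigma psi_neq0 _) SK SinvK.
  + by move=> p; rewrite Qser psi_series_shift.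
- move=> [S [Sinv [sigS _ SK _ QE]]].
  have Sser := inSigma_psi_series charF0 psi0 psi_neq0 sigS.
  set s := sigma_coef psi S in Sser.
  have s0 : s 0%N != 0.
    have S1 : S 1 != 0.
      apply: contra_neq (oner_neq0 {poly F}) => S1.
      by apply: (can_inj SK); rewrite S1 Sser linear0.
    by apply: contraNneq S1 => s0; rewrite Sser psi_series_polyC // s0 mul0r.
  split.
    by split => // a p; rewrite !QE (proj2 sigS) !EpsiE dpsi_psi_series.
  exists (psinum psi 1 * s 0%N); split.
    by rewrite mulf_neq0 // mulf_neq0 ?invr_eq0.
  rewrite QE Sser dpsi_size_le2 ?coef_psi_series_top // ?coefX ?mulr1 //.
  exact: leq_trans (size_psi_series psi_neq0 _ _) size_X.
Qed.
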